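(* Let $p\ge 2$, and let $v,s\in\mathbb{R}^n$ satisfy $v^Ts\ne 0$. Then the linear map $\phi:\mathbb{R}^{\otimes^{p-1} n}_{\mathrm{sym}}\to\mathbb{R}^{\otimes^{p-1} n}_{\mathrm{sym}}$, $\phi(\mathcal{A}) = P_{\mathrm{sym}}(\mathcal{A}\otimes v)[s]$, is bijective. Consequently, for fixed such $v$, the set $\{P_{\mathrm{sym}}(\mathcal{A}\otimes v):\mathcal{A}\in\mathbb{R}^{\otimes^{p-1} n}_{\mathrm{sym}}\}$ has the same dimension as $\mathbb{R}^{\otimes^{p-1} n}_{\mathrm{sym}}$.
   Context: A $p$-tensor $\mathcal{T} \in \mathbb{R}^{\otimes^p n}$ is a multilinear map $(\mathbb{R}^n)^p \to \mathbb{R}$; $\mathcal{T}[s]$ denotes the $(p-1)$-tensor obtained by fixing the first argument to $s$. The outer product is $(\mathcal{T}_1\otimes\mathcal{T}_2)[s_1,\dots,s_{p_1+p_2}] = \mathcal{T}_1[s_1,\dots,s_{p_1}]\,\mathcal{T}_2[s_{p_1+1},\dots,s_{p_1+p_2}]$, with a vector $v$ regarded as the 1-tensor $s\mapsto v^Ts$. For $\sigma\in S_p$, $\sigma(\mathcal{T})[s_1,\dots,s_p]=\mathcal{T}[s_{\sigma(1)},\dots,s_{\sigma(p)}]$; $\mathcal{T}$ is symmetric if $\sigma(\mathcal{T})=\mathcal{T}$ for all $\sigma$, $\mathbb{R}^{\otimes^p n}_{\mathrm{sym}}$ denotes the symmetric $p$-tensors, and $P_{\mathrm{sym}}(\mathcal{T})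 = \frac{1}{p!}\sum_{\sigma\in S_p}\sigma(\mathcal{T})$. *)

From HB Require Import structures.
From mathcomp Require Import all_boot all_order perm all_algebra.
From mathcomp Require Import reals.
Set Implicit Arguments. Unset Strict Implicit. Unset Printing Implicit Defensive.
Import Order.TTheory GRing.Theory Num.Theory.
Local Open Scope ring_scope.

(* A p-tensor on R^n, i.e. a multilinear map (R^n)^p -> R, is represented by its
   coefficient array: T[s_1,...,s_p] = \sum_j T j * \prod_k s_k (j k). *)
Definition tensor (R : realType) (n p : nat) := {ffun {ffun 'I_p -> 'I_n} -> R^o}.

Definition teval (R : realType) n p (T : tensor R n p) (s : 'I_p -> 'I_n -> R) : R :=
  \sum_(j : {ffun 'I_p -> 'I_n}) T j * \prod_(k < p) s k (j k).

(* T[s]: the (p)-tensor obtained by fixing the first argument of the (p+1)-tensor T to s *)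
Definition tcons n q (i : 'I_n) (j : {ffun 'I_q -> 'I_n}) : {ffun 'I_q.+1 -> 'I_n} :=
  [ffun k : 'I_q.+1 => if unlift ord0 k is Some k' then j k' else i].
Definition contract (R : realType) n q (T : tensor R n q.+1) (s : 'I_n -> R)
  : tensor R n q :=
  [ffun j => \sum_(i < n) s i * T (tcons i j)].

(* outer product T (x) v of a q-tensor with a vector v (the 1-tensor s |-> v^T s) *)
Definition tsnoc n q (j : {ffun 'I_q.+1 -> 'I_n}) : {ffun 'I_q -> 'I_n} :=
  [ffun k : 'I_q => j (widen_ord (leqnSn q) k)].
Definition outer_vec (R : realType) n q (T : tensor R n q) (v : 'I_n -> R)
  : tensor R n q.+1 :=
  [ffun j => T (tsnoc j) * v (j ord_max)].

(* sigma(T)[s_1..s_p] = T[s_sigma(1)..s_sigma(p)], in coordinates *)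
Definition tperm (R : realType) n p (sigma : 'S_p) (T : tensor R n p) : tensor R n p :=
  [ffun j : {ffun 'I_p -> 'I_n} => T [ffun k => j (sigma k)]].

Definition sym_tensor (R : realType) n p (T : tensor R n p) : Prop :=
  forall sigma : 'S_p, tperm sigma T = T.

Definition symspace (R : realType) n p : {vspace tensor R n p} :=
  (\bigcap_(sigma : 'S_p) lker (linfun (fun T : tensor R n p => tperm sigma T - T)))%VS.

Definition Psym (R : realType) n p (T : tensor R n p) : tensor R n p :=
  (p`!%:R)^-1 *: \sum_(sigma : 'S_p) tperm sigma T.

Definition dotv (R : realType) n (v s : 'I_n -> R) : R := \sum_(i < n) v i * s i.

(* Let c = v^T s be nonzero.  For a p-tensor B write M B for the "symmetric
   multiplication" (M B)[j] = \sum_k v(j_k) B(j without its k-th index) and D T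
   for the contraction T[s].  The proof rests on three facts:
   - for a symmetric q-tensor A, P_sym(A (x) v) = (q+1)^-1 M A, so that
     phi(A) = (q+1)^-1 D (M A) on symmetric tensors;
   - the commutation rule D (M B) = c B + M (D B) (and D (M B) = c B for scalars);
   - hence, by induction on the order, (k+1) c B + M (D B) = 0 forces B = 0, and
     in particular D o M, and therefore phi, is injective on symmetric tensors.
   Since phi maps the finite-dimensional space of symmetric tensors into itself,
   injectivity gives bijectivity, and the injectivity of A |-> P_sym(A (x) v)
   gives the dimension statement. *)
From Pilot Require Import Defs.
From HB Require Import structures.
From mathcomp Require Import all_boot all_order perm all_algebra.
From mathcomp Require Import reals.
Set Implicit Arguments. Unset Strict Implicit. Unset Printing Implicit Defensive.
Import Order.TTheory GRing.Theory Num.Theory.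
Local Open Scope ring_scope.

Section LinearMaps.
Variables (K : fieldType) (U V : vectType K).

(* [linfun f] agrees with f whenever f is linear; needed because the maps in
   the statement are lambda terms, which carry no canonical linear structure. *)
Lemma linfunE_linear (f : U -> V) :
  (forall a x y, f (a *: x + y) = a *: f x + f y) -> linfun f =1 f.
Proof.
move=> f_linear x.
pose g : {linear U -> V} := HB.pack f (GRing.isLinear.Build K U V _ f f_linear).
exact: (lfunE g x).
Qed.

Lemma capv_lker_eq0 (f : 'Hom(U, V)) (W : {vspace U}) :
  {in W, forall x, f x = 0 -> x = 0} -> (W :&: lker f = 0)%VS.
Proof.
move=> f_inj; apply/eqP; rewrite -subv0; apply/subvP => x.
by rewrite memv_cap memv_ker memv0 => /andP [Wx /eqP/(f_inj x Wx) ->].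
Qed.

End LinearMaps.

Lemma limg_stable_inj (K : fieldType) (V : vectType K) (f : 'End(V))
    (W : {vspace V}) :
  (f @: W <= W)%VS -> (W :&: lker f = 0)%VS -> (f @: W)%VS = W.
Proof.
by move=> fWW f_inj; apply/eqP; rewrite eqEdim fWW (limg_dim_eq f_inj) leqnn. Qed.

(* Summing G over the images of the last point under all permutations counts
   every point (m+1)!/(m+1) times. *)
Lemma sum_perm_at_max (V : nmodType) m (G : 'I_m.+1 -> V) :
  (\sum_(sg : 'S_m.+1) G (sg ord_max)) *+ m.+1 = (\sum_k G k) *+ m.+1`!.
Proof.
have sum_at x y : \sum_(sg : 'S_m.+1) G (sg x) = \sum_(sg : 'S_m.+1) G (sg y).
  rewrite (reindex_inj (mulgI (perm.tperm x y))); apply: eq_bigr => sg _.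
  by rewrite permM tpermL.
transitivity (\sum_(x : 'I_m.+1) \sum_(sg : 'S_m.+1) G (sg x)).
  by rewrite (eq_bigr _ (fun x _ => sum_at x ord_max)) sumr_const card_ord.
rewrite exchange_big /= -card_Sn -sumr_const; apply: eq_bigr => sg _.
by rewrite [RHS](reindex_inj (@perm_inj _ sg)).
Qed.

Section Tensors.
Variables (R : realType) (n : nat).

Lemma scaleRE (a b : R^o) : a *: b = a * b. Proof. by []. Qed.

Lemma tpermM m (sg tau : 'S_m) (T : tensor R n m) :
  Defs.tperm tau (Defs.tperm sg T) = Defs.tperm (sg * tau)%g T.
Proof.
apply/ffunP => j; rewrite !ffunE; congr (T _).
by apply/ffunP => k; rewrite !ffunE permM.
Qed.

Lemma Psym_sym m (T : tensor R n m) : sym_tensor (Psym T).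
Proof.
move=> tau; apply/ffunP => j; rewrite /Psym !ffunE !scaleRE !sum_ffunE.
congr (_ * _); rewrite [RHS](reindex_inj (mulIg tau)) /=.
by apply: eq_bigr => sg _; rewrite -tpermM [in RHS]ffunE.
Qed.

Lemma mem_symspace m (A : tensor R n m) : A \in symspace R n m <-> sym_tensor A.
Proof.
have lin_defect (sg : 'S_m) a (X Y : tensor R n m) :
    Defs.tperm sg (a *: X + Y) - (a *: X + Y) =
    a *: (Defs.tperm sg X - X) + (Defs.tperm sg Y - Y).
  by apply/ffunP => j; rewrite !ffunE !scaleRE mulrBr addrACA opprD.
rewrite memvE; split => [/subv_bigcapP symA sg | symA].
  have := symA sg isT; rewrite -memvE memv_ker linfunE_linear //.
  by rewrite subr_eq0 => /eqP.
apply/subv_bigcapP => sg _.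
by rewrite -memvE memv_ker linfunE_linear // symA subrr.
Qed.

Definition del q (j : {ffun 'I_q.+1 -> 'I_n}) (k : 'I_q.+1) : {ffun 'I_q -> 'I_n} :=
  [ffun l => j (lift k l)].

Lemma tcons0 q i (j : {ffun 'I_q -> 'I_n}) : tcons i j ord0 = i.
Proof. by rewrite ffunE unlift_none. Qed.

Lemma tconsS q i (j : {ffun 'I_q -> 'I_n}) k : tcons i j (lift ord0 k) = j k.
Proof. by rewrite ffunE liftK. Qed.

Lemma del_tcons0 q i (j : {ffun 'I_q -> 'I_n}) : del (tcons i j) ord0 = j.
Proof. by apply/ffunP => l; rewrite !ffunE liftK. Qed.

Lemma del_tconsS q i (j : {ffun 'I_q.+1 -> 'I_n}) k :
  del (tcons i j) (lift ord0 k) = tcons i (del j k).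
Proof.
apply/ffunP => l; rewrite !ffunE; case: (unliftP ord0 l) => [l'|] ->.
  have -> : lift (lift ord0 k) (lift ord0 l') = lift ord0 (lift k l') :> 'I_q.+2.
    by apply: val_inj; rewrite /= /bump !leq0n /= !add1n ltnS; case: (k <= l')%N.
  by rewrite liftK ffunE.
have -> : lift (lift ord0 k) ord0 = ord0 :> 'I_q.+2 by apply: val_inj.
by rewrite unlift_none.
Qed.

Lemma contract_linear q (x : 'I_n -> R) a (X Y : tensor R n q.+1) :
  contract (a *: X + Y) x = a *: contract X x + contract Y x.
Proof.
apply/ffunP => j; rewrite !ffunE scaleRE mulr_sumr -big_split /=.
by apply: eq_bigr => i _; rewrite !ffunE scaleRE mulrDr mulrCA.
Qed.

Lemma contract0 q (x : 'I_n -> R) : contract (0 : tensor R n q.+1) x = 0.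
Proof. by apply/ffunP => j; rewrite !ffunE big1 // => i _; rewrite ffunE mulr0. Qed.

Lemma contract_sym q (T : tensor R n q.+1) (x : 'I_n -> R) :
  sym_tensor T -> sym_tensor (contract T x).
Proof.
move=> symT tau; apply/ffunP => j; rewrite !ffunE; apply: eq_bigr => i _.
congr (_ * _); rewrite -{2}(symT (lift_perm ord0 ord0 tau)) ffunE; congr (T _).
apply/ffunP => k; rewrite !ffunE; case: (unliftP ord0 k) => [k'|] ->.
  by rewrite lift_perm_lift !liftK ffunE.
by rewrite lift_perm_id unlift_none.
Qed.

Lemma Psym_outer_linear m (v : 'I_n -> R) a (X Y : tensor R n m) :
  Psym (outer_vec (a *: X + Y) v) = a *: Psym (outer_vec X v) + Psym (outer_vec Y v).
Proof.
apply/ffunP => j; rewrite /Psym !ffunE !scaleRE !sum_ffunE mulrCA -mulrDr.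
congr (_ * _); rewrite mulr_sumr -big_split; apply: eq_bigr => sg _.
by rewrite !ffunE scaleRE mulrDl mulrA.
Qed.

(* For symmetric A, the first m indices of [j o sg] are, up to order, those of j
   with the index sg(last) removed. *)
Lemma sym_tsnoc_perm m (A : tensor R n m) (sg : 'S_m.+1) (j : {ffun 'I_m.+1 -> 'I_n}) :
  sym_tensor A -> A (tsnoc [ffun k => j (sg k)]) = A (del j (sg ord_max)).
Proof.
move=> symA.
pose f (l : 'I_m) := odflt l (unlift (sg ord_max) (sg (widen_ord (leqnSn m) l))).
have liftf l : lift (sg ord_max) (f l) = sg (widen_ord (leqnSn m) l).
  rewrite /f; case: unliftP => [x ->|] //.
  by move/perm_inj/(congr1 val) => /= eq_l; move: (ltn_ord l); rewrite eq_l ltnn.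
have f_inj : injective f.
  move=> l1 l2 eq_f; apply: val_inj.
  by have := liftf l2; rewrite -eq_f liftf => /perm_inj/(congr1 val).
rewrite -[A in RHS](symA (perm f_inj)) ffunE; congr (A _).
by apply/ffunP => l; rewrite !ffunE permE liftf.
Qed.

End Tensors.

Section SymmetricMultiplication.
Variables (R : realType) (n : nat) (v s : 'I_n -> R).

Definition symmul q (B : tensor R n q) : tensor R n q.+1 :=
  [ffun j : {ffun 'I_q.+1 -> 'I_n} => \sum_(k < q.+1) v (j k) * B (del j k)].

Lemma symmul0 q : symmul (0 : tensor R n q) = 0.
Proof. by apply/ffunP => j; rewrite !ffunE big1 // => k _; rewrite ffunE mulr0. Qed.

Lemma Psym_outer_sym m (A : tensor R n m) :
  sym_tensor A -> Psym (outer_vec A v) = (m.+1%:R)^-1 *: symmul A.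
Proof.
move=> symA; apply/ffunP => j; rewrite /Psym !ffunE !scaleRE sum_ffunE.
pose G k := v (j k) * A (del j k).
rewrite (eq_bigr (fun sg : 'S_m.+1 => G (sg ord_max))) => [|sg _]; last first.
  by rewrite !ffunE sym_tsnoc_perm // mulrC.
have m1_neq0 : (m.+1%:R : R) != 0 by rewrite pnatr_eq0.
have fact_neq0 : (m.+1`!%:R : R) != 0 by rewrite pnatr_eq0 -lt0n fact_gt0.
apply: (mulfI fact_neq0); rewrite mulrA divff // mul1r.
apply: (mulfI m1_neq0); rewrite [RHS]mulrCA mulVKf //.
by rewrite !mulr_natl sum_perm_at_max.
Qed.

Lemma contract_symmul0 (B : tensor R n 0) : contract (symmul B) s = dotv v s *: B.
Proof.
apply/ffunP => j; rewrite !ffunE /dotv scaleRE mulr_suml; apply: eq_bigr => i _.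
by rewrite ffunE big_ord_recl big_ord0 addr0 tcons0 del_tcons0 mulrA [s i * _]mulrC.
Qed.

Lemma contract_symmulS q (B : tensor R n q.+1) :
  contract (symmul B) s = dotv v s *: B + symmul (contract B s).
Proof.
apply/ffunP => j; rewrite !ffunE /dotv scaleRE mulr_suml.
under eq_bigr => i _ do rewrite ffunE big_ord_recl tcons0 del_tcons0 mulrDr mulr_sumr.
rewrite big_split /=; congr (_ + _).
  by apply: eq_bigr => i _; rewrite mulrA [s i * _]mulrC.
rewrite exchange_big /=; apply: eq_bigr => k _.
rewrite ffunE mulr_sumr; apply: eq_bigr => i _.
by rewrite tconsS del_tconsS mulrCA.
Qed.

Hypothesis vs_neq0 : dotv v s != 0.

Lemma shifted_inj d (B : tensor R n d.+1) k :
  (dotv v s *+ k.+1) *: B + symmul (contract B s) = 0 -> B = 0.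
Proof.
have ck_neq0 k' : dotv v s *+ k'.+1 != 0 by rewrite mulrn_eq0 negb_or vs_neq0.
elim: d B k => [|d IH] B k eq0.
  have DB0 : contract B s = 0.
    have := congr1 (fun T => contract T s) eq0.
    rewrite contract_linear contract_symmul0 contract0 -scalerDl -mulrSr.
    by move/eqP; rewrite scaler_eq0 (negbTE (ck_neq0 _)) => /eqP.
  by move/eqP: eq0; rewrite DB0 symmul0 addr0 scaler_eq0 (negbTE (ck_neq0 _)) => /eqP.
have DB0 : contract B s = 0.
  apply: (IH _ k.+1); have := congr1 (fun T => contract T s) eq0.
  by rewrite contract_linear contract_symmulS addrA -scalerDl -mulrSr contract0.
by move/eqP: eq0; rewrite DB0 symmul0 addr0 scaler_eq0 (negbTE (ck_neq0 _)) => /eqP.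
Qed.

Lemma contract_symmul_inj q (B : tensor R n q.+1) : contract (symmul B) s = 0 -> B = 0.
Proof. by move=> DMB0; apply: (@shifted_inj q B 0); rewrite mulr1n -contract_symmulS. Qed.

(* phi is injective on symmetric tensors, since there it equals (q+2)^-1 D o M. *)
Lemma phi_sym_inj q (A : tensor R n q.+1) :
  sym_tensor A -> contract (Psym (outer_vec A v)) s = 0 -> A = 0.
Proof.
move=> symA; rewrite Psym_outer_sym // -[_ *: symmul A]addr0 contract_linear contract0.
rewrite addr0 => /eqP; rewrite scaler_eq0 invr_eq0 pnatr_eq0 /= => /eqP.
exact: contract_symmul_inj.
Qed.

End SymmetricMultiplication.

Theorem mainTheorem3 (R : realType) (n p : nat) (v s : 'I_n -> R) :
  (2 <= p)%N -> dotv v s != 0 ->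
  let phi := fun A : tensor R n p.-1 => contract (Psym (outer_vec A v)) s in
  [/\ (forall A : tensor R n p.-1, sym_tensor A -> sym_tensor (phi A)),
      (forall A B : tensor R n p.-1, sym_tensor A -> sym_tensor B -> phi A = phi B -> A = B),
      (forall B : tensor R n p.-1, sym_tensor B -> exists2 A, sym_tensor A & phi A = B)
    & \dim (linfun (fun A : tensor R n p.-1 => Psym (outer_vec A v)) @: symspace R n p.-1)%VS
      = \dim (symspace R n p.-1)].
Proof.
case: p => [|[|q]] // _ vs_neq0 phi.
have phi_linear a X Y : phi (a *: X + Y) = a *: phi X + phi Y.
  by rewrite /phi Psym_outer_linear contract_linear.
have phi_sym A : sym_tensor (phi A) by apply/contract_sym/Psym_sym.
have phi_onto : (linfun phi @: symspace R n q.+1)%VS = symspace R n q.+1.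
  apply: limg_stable_inj.
    apply/subvP => _ /memv_imgP [A _ ->].
    by rewrite linfunE_linear //; apply/mem_symspace.
  apply: capv_lker_eq0 => A /mem_symspace symA.
  by rewrite linfunE_linear //; apply: phi_sym_inj.
split => // [A B symA symB phiAB | B /mem_symspace |].
- apply/eqP; rewrite -subr_eq0; apply/eqP; apply: (phi_sym_inj vs_neq0).
    by apply/mem_symspace; rewrite rpredB //; apply/mem_symspace.
  rewrite -/(phi (A - B)) -(linfunE_linear phi_linear) linearB /=.
  by rewrite !linfunE_linear // phiAB subrr.
- rewrite -phi_onto => /memv_imgP [A /mem_symspace symA ->].
  by exists A; rewrite ?linfunE_linear.
- apply: limg_dim_eq; apply: capv_lker_eq0 => A /mem_symspace symA.
  rewrite linfunE_linear => [L0|a X Y]; last exact: Psym_outer_linear.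
  by apply: (phi_sym_inj vs_neq0) => //; rewrite L0 contract0.
Qed.
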